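(* Consider the caching network and the backhaul-eavesdropper scenario $S_1$ described in the context, with a placement $\mathbf{m}=(m_1,\dots,m_N)$ of integers $0\le m_j\le n$. For each $j$ let $I_j \triangleq \min\left(S, \lfloor n/m_j\rfloor\right)$ (with $I_j=S$ when $m_j=0$), and assume $\sum_{d=1}^{I_j} d\gamma_d>0$. Then the network is secure in scenario $S_1$ if and only if, for every $j=1,\dots,N$, $$ m_j > \frac{n}{Q p_j}\cdot \frac{Q p_j \sum_{d=1}^{I_j}\gamma_d - 1}{\sum_{d=1}^{I_j} d\,\gamma_d}. $$
   Context: A macro base station (MBS) has access to a library of $N$ files $F_1,\dots,F_N$; file $F_j$ is requested with probability $p_j>0$, $\sum_j p_j=1$. There are $N_{\text{SBS}}$ small-cell base stations (SBSs), each with a cache. Each file is split into $n$ fragments and encoded with a code such that any $n$ distinct encoded packets of a file suffice to recover it, while fewer than $n$ distinct packets do not allow recovery of the file. A placement $\mathbf{m}=(m_1,\dots,m_N)$ means each SBS stores $m_j$ encoded packets of $F_j$, with packets stored at different SBSs all distinct. A user is served by exactly $d$ SBSs with probability $\gamma_d$, $d=1,\dots,S$, where $\gamma_d\ge 0$, $\sum_{d=1}^S\gamma_d=1$, and $S\le N_{\text{SBS}}$ is the maximum number of SBSs serving a user. A user requesting $F_j$ and served by $d$ SBSs receives $d m_j$ distinct packets from them, and the MBS sends the missing $n\left(1-\min(1, d m_j/n)\right)$ new (distinct) packets over the backhaul. Scenario $S_1$: each SBS receives $Q$ requests during the delivery phase, of which $Q p_j$ are for file $F_j$; an eavesdropper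 intercepts all packets sent by the MBS over one MBS-to-SBS link, so the number of (all distinct) packets of $F_j$ it collects is $P_j=\sum_{d=1}^{S} Q\gamma_d p_j\, n\left(1-\min(1,d m_j/n)\right)$. The network is secure in scenario $S_1$ if the eavesdropper cannot recover any file, i.e., $P_j<n$ for all $j=1,\dots,N$. *)

From mathcomp Require Import all_boot all_order all_algebra.
Set Implicit Arguments. Unset Strict Implicit. Unset Printing Implicit Defensive.
Import Order.TTheory GRing.Theory Num.Theory.
Local Open Scope ring_scope.

(* Number of packets of file F_j (popularity pj, placement mj) collected by the
   scenario-S1 eavesdropper on one MBS-to-SBS link:
   P_j = sum_{d=1}^{S} Q gamma_d p_j n (1 - min(1, d m_j / n)). *)
Definition eaves_packets (R : realFieldType) (n S Q : nat) (gamma : nat -> R)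
    (pj : R) (mj : nat) : R :=
  \sum_(1 <= d < S.+1)
     Q%:R * gamma d * pj * n%:R * (1 - Num.min 1 ((d * mj)%:R / n%:R)).

Definition secure_S1 (R : realFieldType) (N n S Q : nat) (gamma : nat -> R)
    (p : 'I_N -> R) (m : 'I_N -> nat) : Prop :=
  forall j : 'I_N, eaves_packets n S Q gamma (p j) (m j) < n%:R.

Definition Iidx (n S mj : nat) : nat :=
  if mj == 0%N then S else minn S (n %/ mj).

(* Only the SBS counts d <= I_j leave the MBS something to send: for d > I_j the
   d SBSs already hold d m_j >= n packets. On the remaining terms the truncation
   min(1, d m_j / n) is inactive, so P_j = Q p_j (n sum gamma_d - m_j sum d gamma_d)
   is affine in m_j with negative slope, and P_j < n solves to the threshold. *)
From mathcomp Require Import all_boot all_order all_algebra.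
From mathcomp Require Import ring.
Set Implicit Arguments. Unset Strict Implicit. Unset Printing Implicit Defensive.
Import Order.TTheory GRing.Theory Num.Theory.
Local Open Scope ring_scope.

Lemma Iidx_le (n S mj : nat) : (Iidx n S mj <= S)%N.
Proof. by rewrite /Iidx; case: eqP => _ //; rewrite geq_minl. Qed.

Lemma mul_le_of_le_Iidx (n S mj d : nat) : (d <= Iidx n S mj)%N -> (d * mj <= n)%N.
Proof.
rewrite /Iidx; case: eqP => [->|/eqP mj0]; first by rewrite muln0.
by rewrite leq_min => /andP[_]; rewrite -leq_divRL // lt0n.
Qed.

Lemma lt_mul_of_Iidx_lt (n S mj d : nat) :
  (Iidx n S mj < d <= S)%N -> (n < d * mj)%N.
Proof.
rewrite /Iidx; case: eqP => [_|/eqP mj0]; first by rewrite ltnNge => /andP[/negbTE->].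
rewrite gtn_min => /andP[/orP[ltSd|]]; first by rewrite leqNgt ltSd.
by rewrite ltn_divLR // lt0n.
Qed.

Lemma min1_divn_id (R : numFieldType) (k n : nat) :
  (0 < n)%N -> (k <= n)%N -> Num.min 1 (k%:R / n%:R : R) = k%:R / n%:R.
Proof. by move=> n0 kn; rewrite min_r // ler_pdivrMr ?ltr0n // mul1r ler_nat. Qed.

Lemma min1_divn_1 (R : numFieldType) (k n : nat) :
  (0 < n)%N -> (n <= k)%N -> Num.min 1 (k%:R / n%:R : R) = 1.
Proof. by move=> n0 nk; rewrite min_l // ler_pdivlMr ?ltr0n // mul1r ler_nat. Qed.

Lemma eaves_packets_Iidx (R : realFieldType) (n S Q : nat) (gamma : nat -> R)
    (pj : R) (mj : nat) : (0 < n)%N ->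
  eaves_packets n S Q gamma pj mj =
  Q%:R * pj * (n%:R * \sum_(1 <= d < (Iidx n S mj).+1) gamma d
               - mj%:R * \sum_(1 <= d < (Iidx n S mj).+1) d%:R * gamma d).
Proof.
move=> n0; have n0R : (n%:R : R) != 0 by rewrite pnatr_eq0 -lt0n.
rewrite /eaves_packets (big_cat_nat _ (n := (Iidx n S mj).+1)) ?ltnS ?Iidx_le //=.
rewrite [X in _ + X]big1_seq ?addr0; last first.
  move=> d /andP[_]; rewrite mem_index_iota ltnS => dI.
  by rewrite min1_divn_1 ?subrr ?mulr0 // ltnW // (lt_mul_of_Iidx_lt dI).
rewrite 2!mulr_sumr -sumrB mulr_sumr.
apply: eq_big_nat => d /andP[_]; rewrite ltnS => dI.
rewrite min1_divn_id ?(mul_le_of_le_Iidx dI) // natrM.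
by field.
Qed.

Lemma affine_lt_iff_threshold (R : realFieldType) (a n A B m : R) :
  0 < a -> 0 < B ->
  (a * (n * A - m * B) < n) = (n / a * ((a * A - 1) / B) < m).
Proof.
move=> a0 B0.
have -> : n / a * ((a * A - 1) / B) = n * (a * A - 1) / (a * B).
  by field; rewrite !gt_eqF.
rewrite ltr_pdivrMr ?mulr_gt0 // -subr_lt0 -[RHS]subr_lt0.
by congr (_ < 0); ring.
Qed.

Theorem proposition3 (R : realFieldType) (N n N_SBS S Q : nat)
    (p : 'I_N -> R) (gamma : nat -> R) (m : 'I_N -> nat)
    (hn : (0 < n)%N) (hQ : (0 < Q)%N) (hS1 : (1 <= S)%N) (hS : (S <= N_SBS)%N)
    (hp : forall j, 0 < p j) (hpsum : \sum_(j < N) p j = 1)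
    (hg : forall d, (1 <= d <= S)%N -> 0 <= gamma d)
    (hgsum : \sum_(1 <= d < S.+1) gamma d = 1)
    (hm : forall j, (m j <= n)%N)
    (hI : forall j, 0 < \sum_(1 <= d < (Iidx n S (m j)).+1) d%:R * gamma d) :
  @secure_S1 R N n S Q gamma p m <->
  (forall j : 'I_N,
     n%:R / (Q%:R * p j) *
       ((Q%:R * p j * \sum_(1 <= d < (Iidx n S (m j)).+1) gamma d - 1)
        / \sum_(1 <= d < (Iidx n S (m j)).+1) d%:R * gamma d)
     < (m j)%:R).
Proof.
have secure_j j : (eaves_packets n S Q gamma (p j) (m j) < n%:R) =
    (n%:R / (Q%:R * p j) *
       ((Q%:R * p j * \sum_(1 <= d < (Iidx n S (m j)).+1) gamma d - 1)
        / \sum_(1 <= d < (Iidx n S (m j)).+1) d%:R * gamma d) < (m j)%:R).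
  by rewrite eaves_packets_Iidx // affine_lt_iff_threshold ?mulr_gt0 ?ltr0n.
by split=> secure j; [rewrite -secure_j | rewrite secure_j].
Qed.
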